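(* For every instance $(V,E,\mu,S^* )$ of Rank Minimization, the minimum over valid partitions $(S_1,\dots,S_c,S^* )$ of the rank $1+|\{i:\mu(S_i)>\mu(S^* )\}|$ equals $1+C_l$, where $C_l$ is the number of connected components of the graph $G\setminus S^*$ that contain a vertex $v$ with $\mu(\{v\})>\mu(S^* )$.
   Context: $V$ is a finite set, $E\subseteq V\times V$ reflexive and symmetric, viewed as a simple undirected graph $G=(V,E)$; $\mu:2^V\to[0,\infty)$ is additive with $\mu(S)=0$ only for $S=\emptyset$; $\mathcal{S}$ is the set of nonempty subsets inducing connected subgraphs of $G$; $S^*\in\mathcal{S}\cup\{\emptyset\}$. $G\setminus S^*$ is the graph on $V\setminus S^*$ with all edges incident to $S^*$ removed. A valid partition is a partition $(S_1,\dots,S_c,S^* )$ of $V$ with all $S_i\in\mathcal{S}$. *)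

From HB Require Import structures.
From mathcomp Require Import all_boot all_order all_algebra.
Set Implicit Arguments. Unset Strict Implicit. Unset Printing Implicit Defensive.
Import Order.TTheory GRing.Theory Num.Theory.
Local Open Scope ring_scope.

Definition induced_rel (V : finType) (E : rel V) (S : {set V}) : rel V :=
  [rel x y | [&& E x y, x \in S & y \in S]].

Definition conn_set (V : finType) (E : rel V) (S : {set V}) : Prop :=
  S != set0 /\ forall x y, x \in S -> y \in S -> connect (induced_rel E S) x y.

Definition measure_ok (R : realDomainType) (V : finType) (mu : {set V} -> R) : Prop :=
  (forall S, 0 <= mu S) /\
  (forall A B : {set V}, [disjoint A & B] -> mu (A :|: B) = mu A + mu B) /\
  (forall S, mu S = 0 -> S = set0).

(* (S_1,...,S_c,S* ) is a valid partition of V: the blocks S_i (a set P of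
   blocks) are in \mathcal S, pairwise disjoint, disjoint from S*, and together
   with S* they cover V. *)
Definition valid_partition (V : finType) (E : rel V) (Sstar : {set V})
    (P : {set {set V}}) : Prop :=
  (forall B, B \in P -> conn_set E B) /\ trivIset P /\ cover P = ~: Sstar.

Definition prank (R : realDomainType) (V : finType) (mu : {set V} -> R)
    (Sstar : {set V}) (P : {set {set V}}) : nat :=
  1 + #|[set B in P | mu Sstar < mu B]|.

Definition components_minus (V : finType) (E : rel V) (Sstar : {set V})
    : {set {set V}} :=
  [set [set y | connect (induced_rel E (~: Sstar)) x y] | x in ~: Sstar].

Definition C_l (R : realDomainType) (V : finType) (E : rel V) (mu : {set V} -> R)
    (Sstar : {set V}) : nat :=
  #|[set C in components_minus E Sstar | [exists v in C, mu Sstar < mu [set v]]]|.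

From HB Require Import structures.
From mathcomp Require Import all_boot all_order all_algebra.
Import Order.TTheory GRing.Theory Num.Theory.
Set Implicit Arguments. Unset Strict Implicit.

(* Every block of a valid partition is connected and avoids S*, hence lies
   inside a single component of G \ S*.  A heavy component (one containing a
   vertex v with mu{v} > mu(S* )) contains the block of such a v, which is heavy
   by monotonicity of mu; distinct heavy components get distinct blocks, so
   C_l never exceeds the number of heavy blocks.  Conversely, keeping the heavy
   components as blocks and cutting every remaining vertex into a singleton
   gives a valid partition whose heavy blocks are exactly the heavy components. *)

Lemma partition_setU_set1 (T : finType) (D : {set T}) (H : {set {set T}}) :
  trivIset H -> set0 \notin H -> cover H \subset D ->
  partition (H :|: [set [set x] | x in D :\: cover H]) D.
Proof.
move=> tiH H0 sHD.
have coverI : cover [set [set x] | x in D :\: cover H] = D :\: cover H.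
  apply/setP=> y; rewrite cover_imset; apply/bigcupP/idP => [[x xD /set1P-> //]|yD].
  by exists y; rewrite ?set11.
apply/and3P; split.
- rewrite [cover _]bigcup_setU [\bigcup_(B in [set _ | _ in _]) B]coverI.
  by rewrite -[\bigcup_(B in H) B](setIidPr sHD) setID.
- apply: trivIsetU => //; last first.
    by rewrite coverI disjoints_subset; apply/subsetP=> x xH; rewrite !inE xH.
  apply/trivIsetP=> _ _ /imsetP[x _ ->] /imsetP[y _ ->] neq.
  by rewrite disjoints1 inE; apply: contraNneq neq => ->.
- rewrite !inE negb_or H0 /=; apply/imsetP => -[x _ /setP/(_ x)].
  by rewrite !inE eqxx.
Qed.

Lemma leq_card_trivIset_refined (T : finType) (A B : {set {set T}}) :
  trivIset A ->
  (forall C, C \in A -> exists2 X, X \in B & X != set0 /\ X \subset C) ->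
  #|A| <= #|B|.
Proof.
move=> tiA refAB.
pose hull (X : {set T}) := \bigcup_(x in X) pblock A x.
apply: (leq_trans _ (leq_imset_card hull B)); apply: subset_leq_card.
apply/subsetP=> C AC; have [X BX [/set0Pn[x Xx] sXC]] := refAB C AC.
apply/imsetP; exists X => //; apply/setP=> y.
have pblockC z : z \in X -> pblock A z = C.
  by move=> Xz; apply: def_pblock (subsetP sXC z Xz).
apply/idP/bigcupP => [Cy | [z Xz]]; last by rewrite pblockC.
by exists x; rewrite ?pblockC.
Qed.

Section InducedConnectivity.

Variables (V : finType) (E : rel V).

Lemma conn_set1 v : conn_set E [set v].
Proof.
split; first by apply/set0Pn; exists v; rewrite inE.
by move=> x y /set1P-> /set1P->; apply: connect0.
Qed.

Lemma induced_rel_sym A : symmetric E -> symmetric (induced_rel E A).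
Proof. by move=> symE x y; rewrite /induced_rel /= symE [(y \in A) && _]andbC. Qed.

Lemma connect_induced_mem (A : {set V}) x y :
  x \in A -> connect (induced_rel E A) x y -> y \in A.
Proof.
move=> Ax /connectP[p pth ->].
by elim: p x Ax pth => //= z p IHp x _ /andP[/and3P[_ _ Az]]; apply: IHp.
Qed.

Lemma connect_induced_sub (A B : {set V}) :
  A \subset B -> subrel (connect (induced_rel E A)) (connect (induced_rel E B)).
Proof.
move=> sAB; apply: connect_sub => x y /and3P[Exy Ax Ay].
by apply: connect1; rewrite /induced_rel /= Exy !(subsetP sAB).
Qed.

Lemma connect_induced_closed (D C : {set V}) x y :
  symmetric E -> closed (induced_rel E D) C -> x \in C ->
  connect (induced_rel E D) x y -> connect (induced_rel E C) x y.
Proof.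
move=> symE clC Cx.
have symD := sym_connect_sym (induced_rel_sym D symE).
pose A := [pred z | (z \in C) && connect (induced_rel E C) x z].
have clA : closed (induced_rel E D) A.
  apply: (intro_closed symD) => u v Duv /andP[Cu xu].
  have Cv : v \in C by rewrite -(clC u v Duv).
  rewrite inE Cv; apply: connect_trans xu (connect1 _).
  by move: Duv => /and3P[Euv _ _]; rewrite /induced_rel /= Euv Cu Cv.
by move=> /(closed_connect clA); rewrite inE Cx connect0 => /esym/andP[].
Qed.

End InducedConnectivity.

Section ComponentsMinus.

Variables (V : finType) (E : rel V) (S : {set V}).
Hypothesis symE : symmetric E.

Local Notation E' := (induced_rel E (~: S)).

Let symE' : connect_sym E' := sym_connect_sym (induced_rel_sym (~: S) symE).

Lemma components_minusE :
  components_minus E S = equivalence_partition (connect E') (~: S).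
Proof.
apply: eq_in_imset => x Sx; apply/setP=> y; rewrite [RHS]inE [LHS]inE.
by case xy: (connect E' x y); rewrite ?andbF // andbT (connect_induced_mem Sx xy).
Qed.

Lemma partition_components_minus : partition (components_minus E S) (~: S).
Proof.
rewrite components_minusE; apply: equivalence_partitionP => x y z _ _ _.
by split=> [|/(same_connect symE')]; first exact: connect0.
Qed.

Lemma conn_set_components_minus C : C \in components_minus E S -> conn_set E C.
Proof.
move=> QC; split; first exact: partition_neq0 partition_components_minus QC.
case/imsetP: QC => x _ -> y z; rewrite !inE => xy xz.
apply: (connect_induced_closed symE _ _ (_ : connect E' y z)).
- by move=> u v; rewrite !inE; apply: connect_closed.
- by rewrite inE.
- by apply: connect_trans xz; rewrite symE'.
Qed.

Lemma conn_set_sub_component X C v :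
  conn_set E X -> X \subset ~: S -> C \in components_minus E S ->
  v \in X -> v \in C -> X \subset C.
Proof.
move=> [_ connX] sXS /imsetP[x _ ->] Xv; rewrite inE => xv.
apply/subsetP=> y Xy; rewrite inE.
exact: connect_trans xv (connect_induced_sub sXS (connX v y Xv Xy)).
Qed.

End ComponentsMinus.

Local Open Scope ring_scope.

Section RankMinimization.

Variables (R : realDomainType) (V : finType) (E : rel V).
Variables (mu : {set V} -> R) (S : {set V}).
Hypotheses (symE : symmetric E) (muP : measure_ok mu).

Lemma subset_le_measure (A B : {set V}) : A \subset B -> mu A <= mu B.
Proof.
case: muP => mu_ge0 [muU _] sAB.
rewrite -(setID B A) (setIidPr sAB) muU ?lerDl //.
by rewrite disjoints_subset; apply/subsetP=> x Ax; rewrite !inE Ax.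
Qed.

Local Notation heavy_components :=
  [set C in components_minus E S | [exists v in C, mu S < mu [set v]]].

Lemma heavy_componentsP C :
  reflect (C \in components_minus E S /\ exists2 v, v \in C & mu S < mu [set v])
          (C \in heavy_components).
Proof. by rewrite inE; apply: (iffP andP) => -[QC /exists_inP]. Qed.

Let partQ := partition_components_minus S symE.

Lemma heavy_components_sub : heavy_components \subset components_minus E S.
Proof. by apply/subsetP=> C /heavy_componentsP[]. Qed.

Lemma trivIset_heavy_components : trivIset heavy_components.
Proof. exact: trivIsetS heavy_components_sub (partition_trivIset partQ). Qed.

Lemma heavy_components_mu C : C \in heavy_components -> mu S < mu C.
Proof.
case/heavy_componentsP=> _ [v Cv lt_S_v].
by apply: lt_le_trans lt_S_v (subset_le_measure _); rewrite sub1set.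
Qed.

Lemma heavy_vertex_cover v :
  v \in ~: S -> mu S < mu [set v] -> v \in cover heavy_components.
Proof.
rewrite -(cover_partition partQ) -mem_pblock => Qv lt_S_v.
apply/bigcupP; exists (pblock (components_minus E S) v) => //.
by apply/heavy_componentsP; split; [apply: pblock_mem; rewrite -mem_pblock | exists v].
Qed.

Lemma C_l_rank_attained :
  exists P, valid_partition E S P /\ prank mu S P = (1 + C_l E mu S)%N.
Proof.
pose P := heavy_components :|: [set [set v] | v in ~: S :\: cover heavy_components].
have partP : partition P (~: S).
  apply: partition_setU_set1; first exact: trivIset_heavy_components.
    by apply: contra (subsetP heavy_components_sub set0) _; case/and3P: partQ.
  rewrite -(cover_partition partQ); apply/bigcupsP=> C HC.
  exact: bigcup_sup (subsetP heavy_components_sub C HC).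
have [/eqP coverP tiP _] := and3P partP.
exists P; split; first split=> //.
  move=> B /setUP[/heavy_componentsP[QC _] | /imsetP[v _ ->]].
    exact: conn_set_components_minus symE _ QC.
  exact: conn_set1.
rewrite /prank /C_l; congr (1 + _)%N; apply: eq_card => B; rewrite inE.
apply/andP/idP => [[/setUP[//|/imsetP[v /setDP[Sv notHv] ->]] lt_S_v] | HB].
  by rewrite (heavy_vertex_cover Sv lt_S_v) in notHv.
by rewrite inE HB heavy_components_mu.
Qed.

Lemma C_l_rank_lower_bound P :
  valid_partition E S P -> (1 + C_l E mu S <= prank mu S P)%N.
Proof.
case=> connP [_ coverP]; rewrite leq_add2l.
apply: leq_card_trivIset_refined trivIset_heavy_components _ => C HC.
have [QC [v Cv lt_S_v]] := heavy_componentsP C HC.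
have Pv : v \in cover P.
  by rewrite coverP -(cover_partition partQ); apply/bigcupP; exists C.
exists (pblock P v); last split.
- rewrite inE pblock_mem //=; apply: lt_le_trans lt_S_v (subset_le_measure _).
  by rewrite sub1set mem_pblock.
- by apply/set0Pn; exists v; rewrite mem_pblock.
- apply: conn_set_sub_component (connP _ (pblock_mem Pv)) _ QC _ Cv.
    by rewrite -coverP; apply: bigcup_sup (pblock_mem Pv).
  by rewrite mem_pblock.
Qed.

End RankMinimization.

Theorem corollary2p5 (R : realDomainType) (V : finType) (E : rel V)
    (mu : {set V} -> R) (Sstar : {set V}) :
  reflexive E -> symmetric E -> measure_ok mu ->
  (Sstar = set0 \/ conn_set E Sstar) ->
  (exists P, valid_partition E Sstar P /\ prank mu Sstar P = (1 + C_l E mu Sstar)%N) /\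
  (forall P, valid_partition E Sstar P -> (1 + C_l E mu Sstar <= prank mu Sstar P)%N).
Proof.
move=> _ symE muP _.
split; [exact: C_l_rank_attained symE muP | exact: C_l_rank_lower_bound symE muP].
Qed.
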